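(* For each $\theta\in C_h$ there exist exactly two primitive Eisenstein triples, of the form $(a,b,c)$ and $(b-a,b,c)$, such that $$\cos\theta = \frac{|b-2a|}{2c} = \frac{|b-2(b-a)|}{2c}.$$ Conversely, for each primitive Eisenstein triple $(a,b,c)$ there exists a unique $\theta\in C_h$ (hence a unique similarity class $C_h(\theta)$) satisfying this equation.
   Context: $\Lambda_h = \begin{bmatrix} 1 & -1/2 \\ 0 & \sqrt3/2\end{bmatrix}\mathbb{Z}^2$. A full-rank lattice $\Gamma\subset\mathbb{R}^2$ is well-rounded (WR) if it has a basis of vectors of minimal nonzero norm; such a basis can be chosen with angle in $[\pi/3,\pi/2]$ between its vectors, and this angle $\theta(\Gamma)$ is an invariant of $\Gamma$. $\mathrm{WR}(\Lambda_h)$ is the set of full-rank WR sublattices of $\Lambda_h$; $C_h = \{\theta\in[\pi/3,\pi/2] : \theta=\theta(\Gamma)\text{ for some }\Gamma\in\mathrm{WR}(\Lambda_h)\}$ and $C_h(\theta)=\{\Omega\in\mathrm{WR}(\Lambda_h):\theta(\Omega)=\theta\}$. An Eisenstein triple is $(a,b,c)\in\mathbb{Z}^3_{\ge0}\setminus\{0\}$ with $a^2-ab+b^2=c^2$; it is primitive if $a\le b$ and $\gcd(a,b,c)=1$. *)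

From Stdlib Require Import Reals ZArith Lra.
Open Scope R_scope.

Definition vec := (R * R)%type.
Definition vadd (u v : vec) : vec := (fst u + fst v, snd u + snd v).
Definition vscal (k : R) (u : vec) : vec := (k * fst u, k * snd u).
Definition dot (u v : vec) : R := fst u * fst v + snd u * snd v.
Definition vnorm (u : vec) : R := sqrt (dot u u).
Definition vzero : vec := (0, 0).

Definition lin_indep (u v : vec) : Prop := fst u * snd v - snd u * fst v <> 0.

Definition lattice_gen (u v : vec) (p : vec) : Prop :=
  exists x y : Z, p = vadd (vscal (IZR x) u) (vscal (IZR y) v).

Definition is_basis (Gamma : vec -> Prop) (u v : vec) : Prop :=
  lin_indep u v /\ forall p, Gamma p <-> lattice_gen u v p.

Definition Lambda_h (p : vec) : Prop :=
  exists m n : Z, p = (IZR m - IZR n / 2, IZR n * sqrt 3 / 2).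

Definition full_sublattice_h (Gamma : vec -> Prop) : Prop :=
  (exists u v, is_basis Gamma u v) /\ (forall p, Gamma p -> Lambda_h p).

Definition is_minimal (Gamma : vec -> Prop) (u : vec) : Prop :=
  Gamma u /\ u <> vzero /\ forall p, Gamma p -> p <> vzero -> vnorm u <= vnorm p.

Definition well_rounded (Gamma : vec -> Prop) : Prop :=
  exists u v, is_basis Gamma u v /\ is_minimal Gamma u /\ is_minimal Gamma v.

Definition angle (u v : vec) : R := acos (dot u v / (vnorm u * vnorm v)).

Definition theta_of (Gamma : vec -> Prop) (theta : R) : Prop :=
  exists u v, is_basis Gamma u v /\ is_minimal Gamma u /\ is_minimal Gamma v /\
    angle u v = theta /\ PI / 3 <= theta <= PI / 2.

Definition C_h (theta : R) : Prop :=
  PI / 3 <= theta <= PI / 2 /\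
  exists Gamma, full_sublattice_h Gamma /\ well_rounded Gamma /\ theta_of Gamma theta.

Definition eisenstein_triple (a b c : Z) : Prop :=
  (0 <= a)%Z /\ (0 <= b)%Z /\ (0 <= c)%Z /\ ~ (a = 0 /\ b = 0 /\ c = 0)%Z /\
  (a * a - a * b + b * b = c * c)%Z.

Definition primitive_eisenstein (a b c : Z) : Prop :=
  eisenstein_triple a b c /\ (a <= b)%Z /\ Z.gcd (Z.gcd a b) c = 1%Z.

(* A full-rank well-rounded sublattice of Lambda_h has a basis of two minimal
   vectors u, v of common squared norm N; writing them in the coordinates of
   Lambda_h, N and r = 2 u.v are integers, cos theta = r / 2N, and the Lagrange
   identity of the hexagonal form gives r^2 + 3k^2 = 4N^2 with k the determinant
   of the coordinates.  Since r and k have the same parity, a = (|k| - r) / 2,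
   b = |k|, c = N is an Eisenstein triple with b - 2a = r; dividing by the gcd
   makes it primitive.  Conversely a primitive triple gives the lattice spanned
   by (c, 0) and a vector of Lambda_h of norm c at angle acos (|b - 2a| / 2c),
   which is well rounded as soon as 0 <= 2 u.v <= N.  Uniqueness: cos theta fixes
   |b - 2a| / c, and 4c^2 = (b - 2a)^2 + 3b^2 then fixes b / c, so a primitive
   triple is determined up to the swap a <-> b - a. *)
From Stdlib Require Import Reals ZArith Lra Lia Znumtheory.
Open Scope R_scope.

Lemma eisenstein_c_pos a b c : eisenstein_triple a b c -> (0 < c)%Z.
Proof.
  intros [Ha [Hb [Hc [Hnz He]]]].
  destruct (Z.eq_dec c 0) as [->|]; [|lia].
  exfalso. apply Hnz. assert (a = 0 /\ b = 0)%Z by nia. lia.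
Qed.

Lemma eisenstein_b_pos a b c : eisenstein_triple a b c -> (a <= b)%Z -> (0 < b)%Z.
Proof.
  intros [Ha [Hb [Hc [Hnz He]]]] Hab.
  destruct (Z.eq_dec b 0) as [->|]; [|lia].
  exfalso. apply Hnz. assert (a = 0 /\ c = 0)%Z by nia. lia.
Qed.

Lemma eisenstein_abs_le a b c :
  (0 <= a <= b)%Z -> (0 <= c)%Z -> (a * a - a * b + b * b = c * c)%Z ->
  (Z.abs (b - 2 * a) <= c)%Z.
Proof.
  intros Hab Hc He.
  (* (b - 2a)^2 = c^2 - 3a(b - a) *)
  assert ((b - 2 * a) * (b - 2 * a) <= c * c)%Z by nia.
  nia.
Qed.

Lemma primitive_eisenstein_swap a b c :
  primitive_eisenstein a b c -> primitive_eisenstein (b - a) b c.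
Proof.
  intros [[Ha [Hb [Hc [Hnz He]]]] [Hab Hg]].
  split; [split; [lia|split; [lia|split; [lia|split]]]|split].
  - intros [h1 [h2 h3]]. apply Hnz; lia.
  - nia.
  - lia.
  - replace (Z.gcd (b - a) b) with (Z.gcd a b); [exact Hg|].
    rewrite (Z.gcd_comm (b - a) b).
    replace (b - a)%Z with (- (a - b))%Z by ring.
    rewrite Z.gcd_opp_r, Z.gcd_sub_diag_r. apply Z.gcd_comm.
Qed.

Lemma primitive_eisenstein_b_neq_2a a b c : primitive_eisenstein a b c -> b <> (2 * a)%Z.
Proof.
  intros [[Ha [Hb [Hc [Hnz He]]]] [Hab Hg]] Hb2. subst b.
  (* c^2 = 3a^2 forces 3 | c, then 3 | a, against primitivity *)
  assert (Ec : (c * c = 3 * (a * a))%Z) by nia.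
  assert (H3c : (3 | c)%Z).
  { destruct (prime_mult 3 prime_3 c c) as [h|h]; auto. rewrite Ec. exists (a * a)%Z; ring. }
  destruct H3c as [d ->].
  assert (Ea : (a * a = 3 * (d * d))%Z) by nia.
  assert (H3a : (3 | a)%Z).
  { destruct (prime_mult 3 prime_3 a a) as [h|h]; auto. rewrite Ea. exists (d * d)%Z; ring. }
  assert (H3g : (3 | Z.gcd (Z.gcd a (2 * a)) (d * 3))%Z).
  { apply Z.gcd_greatest; [apply Z.gcd_greatest|].
    - exact H3a.
    - apply Z.divide_mul_r. exact H3a.
    - exists d; ring. }
  rewrite Hg in H3g. destruct H3g as [q Hq]. lia.
Qed.

Lemma primitive_eisenstein_proportional a b c a' b' c' :
  primitive_eisenstein a b c -> primitive_eisenstein a' b' c' ->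
  (a * c' = a' * c)%Z -> (b * c' = b' * c)%Z -> (a', b', c') = (a, b, c).
Proof.
  intros P P' Ea Eb.
  pose proof (eisenstein_c_pos _ _ _ (proj1 P)) as Hc.
  pose proof (eisenstein_c_pos _ _ _ (proj1 P')) as Hc'.
  destruct P as [_ [_ Hg]]. destruct P' as [_ [_ Hg']].
  assert (G : Z.gcd (Z.gcd (a * c') (b * c')) (c * c') = c').
  { rewrite Z.gcd_mul_mono_r, (Z.abs_eq c') by lia. rewrite Z.gcd_mul_mono_r, Hg. lia. }
  assert (G' : Z.gcd (Z.gcd (a' * c) (b' * c)) (c' * c) = c).
  { rewrite Z.gcd_mul_mono_r, (Z.abs_eq c) by lia. rewrite Z.gcd_mul_mono_r, Hg'. lia. }
  rewrite Ea, Eb, (Z.mul_comm c c'), G' in G. subst c'.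
  assert (a' = a) by nia. assert (b' = b) by nia. subst. reflexivity.
Qed.

Lemma primitive_eisenstein_cos_unique a b c a' b' c' :
  primitive_eisenstein a b c -> primitive_eisenstein a' b' c' ->
  (Z.abs (b - 2 * a) * c' = Z.abs (b' - 2 * a') * c)%Z ->
  (a', b', c') = (a, b, c) \/ (a', b', c') = ((b - a)%Z, b, c).
Proof.
  intros P P' E.
  pose proof (eisenstein_c_pos _ _ _ (proj1 P)) as Hc.
  pose proof (eisenstein_c_pos _ _ _ (proj1 P')) as Hc'.
  pose proof P as [[Ha [Hb [_ [_ He]]]] _].
  pose proof P' as [[Ha' [Hb' [_ [_ He']]]] _].
  assert (Ex : ((b - 2 * a) * c' = (b' - 2 * a') * c \/
                (b - 2 * a) * c' = - ((b' - 2 * a') * c))%Z) by nia.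
  assert (Ex2 : ((b - 2 * a) * c' * ((b - 2 * a) * c') =
                 (b' - 2 * a') * c * ((b' - 2 * a') * c))%Z) by (destruct Ex as [h|h]; rewrite h; ring).
  (* 4c^2 = (b - 2a)^2 + 3b^2, scaled by c'^2 and c^2 *)
  assert (Eb2 : (b * c' * (b * c') = b' * c * (b' * c))%Z).
  { assert (4 * (c * c') * (c * c') = (b - 2 * a) * c' * ((b - 2 * a) * c') + 3 * (b * c' * (b * c')))%Z
      by (replace (4 * (c * c') * (c * c'))%Z with (4 * (c * c) * (c' * c'))%Z by ring;
          rewrite <- He; ring).
    assert (4 * (c * c') * (c * c') = (b' - 2 * a') * c * ((b' - 2 * a') * c) + 3 * (b' * c * (b' * c)))%Z
      by (replace (4 * (c * c') * (c * c'))%Z with (4 * (c' * c') * (c * c))%Z by ring;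
          rewrite <- He'; ring).
    lia. }
  assert (Eb : (b * c' = b' * c)%Z) by nia.
  destruct Ex as [Ex|Ex]; [left|right]; apply primitive_eisenstein_proportional; auto.
  - lia.
  - apply primitive_eisenstein_swap, P.
  - lia.
Qed.

Lemma eisenstein_reduce a0 b0 c0 :
  (0 <= a0 <= b0)%Z -> (0 < c0)%Z -> (a0 * a0 - a0 * b0 + b0 * b0 = c0 * c0)%Z ->
  exists a b c g, (0 < g)%Z /\ a0 = (a * g)%Z /\ b0 = (b * g)%Z /\ c0 = (c * g)%Z /\
    primitive_eisenstein a b c.
Proof.
  intros Hab Hc E.
  set (g := Z.gcd (Z.gcd a0 b0) c0).
  assert (Hg : (0 < g)%Z).
  { assert (0 <= g)%Z by apply Z.gcd_nonneg.
    destruct (Z.eq_dec g 0) as [h|]; [|lia].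
    apply Z.gcd_eq_0 in h. lia. }
  assert (Da : (g | a0)%Z) by (eapply Z.divide_trans; [apply Z.gcd_divide_l|apply Z.gcd_divide_l]).
  assert (Db : (g | b0)%Z) by (eapply Z.divide_trans; [apply Z.gcd_divide_l|apply Z.gcd_divide_r]).
  assert (Dc : (g | c0)%Z) by apply Z.gcd_divide_r.
  destruct Da as [a Ea]. destruct Db as [b Eb]. destruct Dc as [c Ec].
  exists a, b, c, g. do 4 (split; [assumption|]).
  assert (G : g = (g * Z.gcd (Z.gcd a b) c)%Z).
  { unfold g at 1. rewrite Ea, Eb, Ec, Z.gcd_mul_mono_r, (Z.abs_eq g) by lia.
    rewrite Z.gcd_mul_mono_r. lia. }
  clearbody g. subst a0 b0 c0.
  split; [split; [nia|split; [nia|split; [nia|split]]]|split].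
  - intros [h1 [h2 h3]]. subst. lia.
  - apply (Z.mul_reg_l _ _ (g * g)); nia.
  - nia.
  - nia.
Qed.

Definition hex_point (m n : Z) : vec := (IZR m - IZR n / 2, IZR n * sqrt 3 / 2).

Definition hex_norm (m n : Z) : Z := (m * m - m * n + n * n)%Z.

(* twice the inner product of [hex_point m1 n1] and [hex_point m2 n2] *)
Definition hex_pairing (m1 n1 m2 n2 : Z) : Z :=
  (2 * m1 * m2 + 2 * n1 * n2 - m1 * n2 - n1 * m2)%Z.

Lemma hex_pairing_lagrange m1 n1 m2 n2 :
  (hex_pairing m1 n1 m2 n2 * hex_pairing m1 n1 m2 n2 +
   3 * ((m1 * n2 - n1 * m2) * (m1 * n2 - n1 * m2)) =
   4 * (hex_norm m1 n1 * hex_norm m2 n2))%Z.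
Proof. unfold hex_pairing, hex_norm. ring. Qed.

Lemma dot_hex_point m1 n1 m2 n2 :
  dot (hex_point m1 n1) (hex_point m2 n2) = IZR (hex_pairing m1 n1 m2 n2) / 2.
Proof.
  unfold dot, hex_point, hex_pairing; cbn [fst snd].
  rewrite !minus_IZR, !plus_IZR, !mult_IZR.
  replace (IZR n1 * sqrt 3 / 2 * (IZR n2 * sqrt 3 / 2))
    with (IZR n1 * IZR n2 / 4 * (sqrt 3 * sqrt 3)) by field.
  rewrite sqrt_sqrt by lra. field.
Qed.

Lemma dot_hex_point_diag m n : dot (hex_point m n) (hex_point m n) = IZR (hex_norm m n).
Proof.
  rewrite dot_hex_point.
  replace (hex_pairing m n m n) with (2 * hex_norm m n)%Z by (unfold hex_pairing, hex_norm; ring).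
  rewrite mult_IZR. field.
Qed.

Lemma Lambda_h_lincomb (x y : Z) u v : Lambda_h u -> Lambda_h v ->
  Lambda_h (vadd (vscal (IZR x) u) (vscal (IZR y) v)).
Proof.
  intros [m1 [n1 ->]] [m2 [n2 ->]].
  exists (x * m1 + y * m2)%Z, (x * n1 + y * n2)%Z.
  unfold vadd, vscal; cbn [fst snd]. rewrite !plus_IZR, !mult_IZR. f_equal; field.
Qed.

Lemma Z_quadratic_form_ge1 x y : (x, y) <> (0%Z, 0%Z) -> (1 <= x * x + y * y - Z.abs (x * y))%Z.
Proof.
  intros Hxy.
  destruct (Z.eq_dec x 0) as [->|]; destruct (Z.eq_dec y 0) as [->|];
    [congruence|nia|nia|nia].
Qed.

Lemma dot_lincomb x y u v :
  dot (vadd (vscal x u) (vscal y v)) (vadd (vscal x u) (vscal y v)) =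
  x * x * dot u u + y * y * dot v v + 2 * x * y * dot u v.
Proof. unfold dot, vadd, vscal; cbn [fst snd]. ring. Qed.

Lemma dot_nonneg u : 0 <= dot u u.
Proof. unfold dot. nra. Qed.

Lemma dot_pos u : u <> vzero -> 0 < dot u u.
Proof.
  destruct u as [x y]. unfold dot, vzero; cbn [fst snd]. intros Hu.
  destruct (Req_dec x 0) as [->|]; destruct (Req_dec y 0) as [->|]; [congruence|nra|nra|nra].
Qed.

Lemma dot_cauchy_schwarz u v : dot u v * dot u v <= dot u u * dot v v.
Proof.
  destruct u as [u1 u2], v as [v1 v2]. unfold dot; cbn [fst snd].
  (* Lagrange: |u|^2 |v|^2 - (u.v)^2 = (u1 v2 - u2 v1)^2 *)
  pose proof (Rle_0_sqr (u1 * v2 - u2 * v1)) as H. unfold Rsqr in H.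
  nra.
Qed.

Lemma lin_indep_neq0_l u v : lin_indep u v -> u <> vzero.
Proof. intros H ->. apply H. unfold vzero; cbn [fst snd]. ring. Qed.

Lemma lin_indep_neq0_r u v : lin_indep u v -> v <> vzero.
Proof. intros H ->. apply H. unfold vzero; cbn [fst snd]. ring. Qed.

Lemma minimal_dot_eq Gamma u v :
  is_minimal Gamma u -> is_minimal Gamma v -> dot u u = dot v v.
Proof.
  intros [Gu [Nu Mu]] [Gv [Nv Mv]].
  apply sqrt_inj; try apply dot_nonneg.
  apply Rle_antisym; [apply Mu|apply Mv]; assumption.
Qed.

Lemma angle_bound u v : 0 <= angle u v <= PI.
Proof. apply acos_bound. Qed.

Lemma angle_eq_norms u v : dot u u = dot v v -> angle u v = acos (dot u v / dot u u).
Proof.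
  intros E. unfold angle, vnorm. rewrite <- E, sqrt_sqrt by apply dot_nonneg. reflexivity.
Qed.

Lemma cos_angle_eq_norms u v :
  u <> vzero -> dot u u = dot v v -> cos (angle u v) = dot u v / dot u u.
Proof.
  intros Hu E. rewrite angle_eq_norms by exact E.
  pose proof (dot_pos u Hu) as Hpos.
  pose proof (dot_cauchy_schwarz u v) as CS. rewrite <- E in CS.
  apply cos_acos. split.
  - apply (Rmult_le_reg_r (dot u u)); [exact Hpos|]. field_simplify; nra.
  - apply (Rmult_le_reg_r (dot u u)); [exact Hpos|]. field_simplify; nra.
Qed.

Lemma cos_le_iff x y : 0 <= x <= PI -> 0 <= y <= PI -> x <= y <-> cos y <= cos x.
Proof.
  intros Hx Hy. split; intros H.
  - destruct (Req_dec x y) as [->|]; [lra|].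
    left. apply cos_decreasing_1; lra.
  - destruct (Rle_or_lt x y) as [|Hlt]; [assumption|].
    pose proof (cos_decreasing_1 y x) as D. lra.
Qed.

Lemma angle_range_iff t : 0 <= t <= PI -> PI / 3 <= t <= PI / 2 <-> 0 <= cos t <= 1 / 2.
Proof.
  intros Ht. pose proof PI_RGT_0.
  rewrite (cos_le_iff (PI / 3) t), (cos_le_iff t (PI / 2)), cos_PI3, cos_PI2 by lra.
  lra.
Qed.

Lemma half_ratio_bounds r N : (0 < N)%Z ->
  (0 <= r <= N)%Z <-> 0 <= IZR r / (2 * IZR N) <= 1 / 2.
Proof.
  intros HN. apply IZR_lt in HN.
  split.
  - intros [H0 H1]. apply IZR_le in H0. apply IZR_le in H1. split.
    + apply Rmult_le_pos; [lra|]. left. apply Rinv_0_lt_compat. lra.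
    + apply (Rmult_le_reg_r (2 * IZR N)); [lra|]. field_simplify; lra.
  - intros [H0 H1]. split; apply le_IZR.
    + apply (Rmult_le_reg_r (/ (2 * IZR N))); [apply Rinv_0_lt_compat; lra|]. lra.
    + apply (Rmult_le_reg_r (/ (2 * IZR N))); [apply Rinv_0_lt_compat; lra|].
      replace (IZR N * / (2 * IZR N)) with (1 / 2) by (field; lra). lra.
Qed.

Lemma half_ratio_cross x x' c c' : (0 < c)%Z -> (0 < c')%Z ->
  IZR x / (2 * IZR c) = IZR x' / (2 * IZR c') -> (x * c' = x' * c)%Z.
Proof.
  intros Hc Hc' E. apply IZR_lt in Hc. apply IZR_lt in Hc'.
  apply eq_IZR. rewrite !mult_IZR.
  apply (Rmult_eq_reg_r (/ (2 * IZR c * IZR c'))); [|apply Rinv_neq_0_compat; nra].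
  replace (IZR x * IZR c' * / (2 * IZR c * IZR c')) with (IZR x / (2 * IZR c)) by (field; lra).
  rewrite E. field. lra.
Qed.

Section ReducedPair.

Variables u v : vec.
Hypothesis indep : lin_indep u v.
Hypothesis same_norm : dot u u = dot v v.
Hypothesis pairing_ge0 : 0 <= 2 * dot u v.
Hypothesis pairing_le : 2 * dot u v <= dot u u.

Lemma reduced_pair_dot_ge p : lattice_gen u v p -> p <> vzero -> dot u u <= dot p p.
Proof.
  intros [x [y ->]] Hp.
  assert (Hxy : (x, y) <> (0%Z, 0%Z)).
  { intros h. injection h as -> ->. apply Hp. unfold vzero, vadd, vscal; cbn [fst snd]. f_equal; ring. }
  pose proof (Z_quadratic_form_ge1 x y Hxy) as G. apply IZR_le in G.
  rewrite minus_IZR, plus_IZR, !mult_IZR, <- Rabs_Zabs, mult_IZR in G.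
  rewrite dot_lincomb, <- same_norm.
  set (X := IZR x) in *. set (Y := IZR y) in *. set (N := dot u u) in *. set (d := dot u v) in *.
  (* |2 X Y d| <= |XY| N, hence the form is at least N (X^2 + Y^2 - |XY|) *)
  assert (Hcross : - (Rabs (X * Y) * N) <= 2 * X * Y * d).
  { destruct (Rle_or_lt 0 (X * Y)).
    - rewrite Rabs_right by lra. nra.
    - rewrite Rabs_left by lra. nra. }
  assert (N * 1 <= N * (X * X + Y * Y - Rabs (X * Y))) by (apply Rmult_le_compat_l; lra).
  lra.
Qed.

Lemma reduced_pair_minimal_l : is_minimal (lattice_gen u v) u.
Proof.
  split; [|split].
  - exists 1%Z, 0%Z. destruct u. unfold vadd, vscal; cbn [fst snd]. f_equal; ring.
  - exact (lin_indep_neq0_l u v indep).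
  - intros p Gp Hp. apply sqrt_le_1_alt, reduced_pair_dot_ge; assumption.
Qed.

Lemma reduced_pair_minimal_r : is_minimal (lattice_gen u v) v.
Proof.
  split; [|split].
  - exists 0%Z, 1%Z. destruct v. unfold vadd, vscal; cbn [fst snd]. f_equal; ring.
  - exact (lin_indep_neq0_r u v indep).
  - intros p Gp Hp. unfold vnorm. rewrite <- same_norm.
    apply sqrt_le_1_alt, reduced_pair_dot_ge; assumption.
Qed.

Lemma reduced_pair_angle_range : PI / 3 <= angle u v <= PI / 2.
Proof.
  apply angle_range_iff; [apply angle_bound|].
  pose proof (lin_indep_neq0_l u v indep) as Hu.
  pose proof (dot_pos u Hu) as Hpos.
  rewrite cos_angle_eq_norms by assumption. split.
  - apply Rmult_le_pos; [lra|]. left. apply Rinv_0_lt_compat, Hpos.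
  - apply (Rmult_le_reg_r (dot u u)); [exact Hpos|]. field_simplify; lra.
Qed.

Lemma C_h_reduced_pair : Lambda_h u -> Lambda_h v -> C_h (angle u v).
Proof.
  intros Lu Lv.
  assert (Hbasis : is_basis (lattice_gen u v) u v) by (split; [exact indep|tauto]).
  split; [exact reduced_pair_angle_range|].
  exists (lattice_gen u v). split; [split|split].
  - exists u, v. exact Hbasis.
  - intros p [x [y ->]]. apply Lambda_h_lincomb; assumption.
  - exists u, v. auto using reduced_pair_minimal_l, reduced_pair_minimal_r.
  - exists u, v. split; [exact Hbasis|split; [apply reduced_pair_minimal_l|split]].
    + apply reduced_pair_minimal_r.
    + split; [reflexivity|apply reduced_pair_angle_range].
Qed.

End ReducedPair.

Lemma C_h_hex_cos theta : C_h theta ->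
  exists m1 n1 m2 n2, hex_norm m1 n1 = hex_norm m2 n2 /\ (0 < hex_norm m1 n1)%Z /\
    cos theta = IZR (hex_pairing m1 n1 m2 n2) / (2 * IZR (hex_norm m1 n1)) /\
    0 <= cos theta <= 1 / 2.
Proof.
  intros [Hrange [Gamma [[_ Hsub] [_ [u [v [_ [Mu [Mv [Hang _]]]]]]]]]].
  pose proof (minimal_dot_eq _ _ _ Mu Mv) as Hd.
  pose proof (dot_pos u (proj1 (proj2 Mu))) as Hpos.
  pose proof (cos_angle_eq_norms u v (proj1 (proj2 Mu)) Hd) as Hcos.
  rewrite Hang in Hcos.
  destruct (Hsub u (proj1 Mu)) as [m1 [n1 Eu]]. change (u = hex_point m1 n1) in Eu.
  destruct (Hsub v (proj1 Mv)) as [m2 [n2 Ev]]. change (v = hex_point m2 n2) in Ev.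
  subst u v. rewrite !dot_hex_point_diag in Hd. rewrite dot_hex_point_diag in Hpos. rewrite dot_hex_point_diag, dot_hex_point in Hcos.
  exists m1, n1, m2, n2. repeat split.
  - apply eq_IZR, Hd.
  - apply lt_IZR, Hpos.
  - rewrite Hcos. field. lra.
  - apply angle_range_iff; [pose proof PI_RGT_0; lra|exact Hrange].
  - apply angle_range_iff; [pose proof PI_RGT_0; lra|exact Hrange].
Qed.

Lemma hex_pair_eisenstein m1 n1 m2 n2 :
  hex_norm m1 n1 = hex_norm m2 n2 -> (0 <= hex_pairing m1 n1 m2 n2 <= hex_norm m1 n1)%Z ->
  exists a0 b0, (0 <= a0 <= b0)%Z /\ hex_pairing m1 n1 m2 n2 = (b0 - 2 * a0)%Z /\
    (a0 * a0 - a0 * b0 + b0 * b0 = hex_norm m1 n1 * hex_norm m1 n1)%Z.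
Proof.
  intros HN Hr.
  pose proof (hex_pairing_lagrange m1 n1 m2 n2) as L. rewrite <- HN in L.
  set (N := hex_norm m1 n1) in *. set (r := hex_pairing m1 n1 m2 n2) in *.
  set (k := (m1 * n2 - n1 * m2)%Z) in *.
  (* r and k have the same parity, so a0 = (|k| - r) / 2 is an integer *)
  assert (Ha0 : exists a0, (2 * a0 = Z.abs k - r)%Z).
  { destruct (Z_le_gt_dec 0 k).
    - exists (- (m1 * m2 + n1 * n2 - m1 * n2))%Z. rewrite Z.abs_eq by lia.
      unfold r, k, hex_pairing. ring.
    - exists (- (m1 * m2 + n1 * n2 - n1 * m2))%Z. rewrite Z.abs_neq by lia.
      unfold r, k, hex_pairing. ring. }
  destruct Ha0 as [a0 Ha0].
  assert (Habs : (Z.abs k * Z.abs k = k * k)%Z) by lia.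
  assert (Hrk : (r <= Z.abs k)%Z) by nia.
  exists a0, (Z.abs k). repeat split; nia.
Qed.

Lemma C_h_primitive_cos theta : C_h theta ->
  exists a b c, primitive_eisenstein a b c /\ (0 <= b - 2 * a)%Z /\
    cos theta = IZR (b - 2 * a) / (2 * IZR c).
Proof.
  intros H.
  destruct (C_h_hex_cos theta H) as [m1 [n1 [m2 [n2 [HN [Hpos [Hcos Hbnd]]]]]]].
  rewrite Hcos in Hbnd. apply half_ratio_bounds in Hbnd; [|exact Hpos].
  destruct (hex_pair_eisenstein m1 n1 m2 n2 HN Hbnd) as [a0 [b0 [Hab [Hr He]]]].
  destruct (eisenstein_reduce a0 b0 (hex_norm m1 n1) Hab Hpos He)
    as [a [b [c [g [Hg [-> [-> [Ec P]]]]]]]].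
  pose proof (eisenstein_c_pos _ _ _ (proj1 P)) as Hc.
  exists a, b, c. split; [exact P|split; [nia|]].
  rewrite Hcos, Hr, Ec.
  replace (b * g - 2 * (a * g))%Z with ((b - 2 * a) * g)%Z by ring.
  rewrite !mult_IZR. field.
  split; apply not_0_IZR; lia.
Qed.

Lemma C_h_acos_hex m n c : (0 < c)%Z -> n <> 0%Z -> hex_norm m n = (c * c)%Z ->
  (0 <= 2 * m - n <= c)%Z -> C_h (acos (IZR (2 * m - n) / (2 * IZR c))).
Proof.
  intros Hc Hn HN Hmn.
  set (u := hex_point c 0). set (v := hex_point m n).
  assert (Duu : dot u u = IZR c * IZR c).
  { unfold u. rewrite dot_hex_point_diag, <- mult_IZR. f_equal. unfold hex_norm. ring. }
  assert (Dvv : dot v v = IZR c * IZR c) by (unfold v; rewrite dot_hex_point_diag, HN, mult_IZR; reflexivity).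
  assert (Duv : dot u v = IZR c * IZR (2 * m - n) / 2).
  { unfold u, v. rewrite dot_hex_point, <- mult_IZR. f_equal. f_equal. unfold hex_pairing. ring. }
  apply IZR_lt in Hc. destruct Hmn as [H0 H1]. apply IZR_le in H0. apply IZR_le in H1.
  replace (acos (IZR (2 * m - n) / (2 * IZR c))) with (angle u v)
    by (rewrite angle_eq_norms, Duu, Duv by congruence; f_equal; field; lra).
  apply C_h_reduced_pair.
  - unfold lin_indep, u, v, hex_point; cbn [fst snd].
    replace ((IZR c - IZR 0 / 2) * (IZR n * sqrt 3 / 2) - IZR 0 * sqrt 3 / 2 * (IZR m - IZR n / 2))
      with (IZR c * IZR n * sqrt 3 / 2) by field.
    pose proof (sqrt_lt_R0 3 ltac:(lra)). pose proof (not_0_IZR n Hn).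
    intro E. assert (E' : IZR c * (IZR n * sqrt 3) = 0) by lra.
    apply Rmult_integral in E' as [E'|E']; [lra|].
    apply Rmult_integral in E' as [E'|E']; lra.
  - congruence.
  - rewrite Duv. nra.
  - rewrite Duv, Duu. nra.
  - exists c, 0%Z. reflexivity.
  - exists m, n. reflexivity.
Qed.

Lemma C_h_acos_primitive a b c : primitive_eisenstein a b c ->
  C_h (acos (IZR (Z.abs (b - 2 * a)) / (2 * IZR c))).
Proof.
  intros P. pose proof P as [[Ha [Hb [Hc0 [_ He]]]] [Hab _]].
  pose proof (eisenstein_c_pos _ _ _ (proj1 P)) as Hc.
  pose proof (eisenstein_b_pos _ _ _ (proj1 P) Hab) as Hbpos.
  pose proof (eisenstein_abs_le a b c ltac:(lia) Hc0 He) as Hle.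
  (* the vector of coordinates (b - a, b) or (a, b) has norm c *)
  destruct (Z_le_gt_dec (2 * a) b).
  - replace (Z.abs (b - 2 * a)) with (2 * (b - a) - b)%Z by lia.
    apply C_h_acos_hex; [lia|lia|unfold hex_norm; lia|lia].
  - replace (Z.abs (b - 2 * a)) with (2 * a - b)%Z by lia.
    apply C_h_acos_hex; [lia|lia|unfold hex_norm; lia|lia].
Qed.

Theorem corollary4p6 :
  (forall theta : R, C_h theta ->
     exists a b c : Z,
       primitive_eisenstein a b c /\ primitive_eisenstein (b - a) b c /\
       (a, b, c) <> ((b - a)%Z, b, c) /\
       cos theta = Rabs (IZR (b - 2 * a)) / (2 * IZR c) /\
       cos theta = Rabs (IZR (b - 2 * (b - a))) / (2 * IZR c) /\
       (forall a' b' c' : Z, primitive_eisenstein a' b' c' ->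
          cos theta = Rabs (IZR (b' - 2 * a')) / (2 * IZR c') ->
          (a', b', c') = (a, b, c) \/ (a', b', c') = ((b - a)%Z, b, c)))
  /\
  (forall a b c : Z, primitive_eisenstein a b c ->
     exists! theta : R, C_h theta /\ cos theta = Rabs (IZR (b - 2 * a)) / (2 * IZR c)).
Proof.
  split.
  - intros theta H.
    destruct (C_h_primitive_cos theta H) as [a [b [c [P [Hx Hcos]]]]].
    assert (Habs : Rabs (IZR (b - 2 * a)) = IZR (b - 2 * a))
      by (rewrite Rabs_Zabs, Z.abs_eq by exact Hx; reflexivity).
    exists a, b, c.
    split; [exact P|split; [apply primitive_eisenstein_swap, P|split; [|split; [|split]]]].
    + intros E. injection E as E. apply (primitive_eisenstein_b_neq_2a a b c P). lia.
    + rewrite Habs. exact Hcos.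
    + replace (b - 2 * (b - a))%Z with (- (b - 2 * a))%Z by ring.
      rewrite opp_IZR, Rabs_Ropp, Habs. exact Hcos.
    + intros a' b' c' P' Hcos'.
      apply primitive_eisenstein_cos_unique; [exact P|exact P'|].
      apply half_ratio_cross;
        [exact (eisenstein_c_pos _ _ _ (proj1 P))|exact (eisenstein_c_pos _ _ _ (proj1 P'))|].
      rewrite <- !Rabs_Zabs, Habs, <- Hcos. exact Hcos'.
  - intros a b c P.
    pose proof P as [[Ha [Hb [Hc0 [_ He]]]] [Hab _]].
    pose proof (eisenstein_c_pos _ _ _ (proj1 P)) as Hc.
    pose proof (eisenstein_abs_le a b c ltac:(lia) Hc0 He) as Hle.
    rewrite Rabs_Zabs.
    pose proof (proj1 (half_ratio_bounds (Z.abs (b - 2 * a)) c Hc) ltac:(lia)) as Hq.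
    exists (acos (IZR (Z.abs (b - 2 * a)) / (2 * IZR c))). split.
    + split; [apply C_h_acos_primitive, P|apply cos_acos; lra].
    + intros t [[Ht _] Hct]. rewrite <- Hct. apply acos_cos.
      pose proof PI_RGT_0. lra.
Qed.
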